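(* Let $m_0,r\ge 0$ and $m$ be integers with $0\le m\le m_0+r$, and let $X\sim\mathrm{Hyper}(m_0,r;m)$, i.e. $\mathbb P(X=k)=\binom{m_0}{k}\binom{r}{m-k}\big/\binom{m_0+r}{m}$. Then $$\mathbb E\left[\frac{X}{1+m-X}\cdot\frac{r+X-m}{1+m_0-X}\right]=1-\frac{\binom{m_0}{m_0\wedge m}\binom{r}{m-m_0\wedge m}}{\binom{m_0+r}{m}}.$$ In particular this expectation is at most $1$ for every $m$.
   Context: $a\wedge b=\min(a,b)$. Binomial coefficient conventions: $\binom{0}{0}=1$, and $\binom{n}{k}=0$ if $n<0$, or if $k<0$, or if $k>n$. *)

From mathcomp Require Import all_boot all_order all_algebra.
Set Implicit Arguments. Unset Strict Implicit. Unset Printing Implicit Defensive.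
Import Order.TTheory GRing.Theory Num.Theory.
Local Open Scope ring_scope.

Definition hyper_pmf (m0 r m k : nat) : rat :=
  ('C(m0, k) * 'C(r, m - k))%:R / ('C(m0 + r, m))%:R.

Definition hyper_g (m0 r m k : nat) : rat :=
  (k%:R / (1 + m%:R - k%:R)) * ((r%:R + k%:R - m%:R) / (1 + m0%:R - k%:R)).

(* E[g(X)]: X takes values in {0,..,m}; atoms outside the support have
   probability zero. *)
Definition hyper_expect (m0 r m : nat) (g : nat -> rat) : rat :=
  \sum_(k < m.+1) hyper_pmf m0 r m k * g k.

From mathcomp Require Import all_boot all_order all_algebra.
From mathcomp Require Import zify ring.
Import Order.TTheory GRing.Theory Num.Theory.
Local Open Scope ring_scope.

(* The factors of g absorb the binomials of the weight of k:
   k C(m0,k)/(m0-k+1) = C(m0,k-1) and (r-m+k) C(r,m-k)/(m-k+1) = C(r,m-k+1).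
   Hence the expectation is the Vandermonde sum for C(m0+r,m) shifted by one
   index and cut off below m0 /\ m; the missing term j = m0 /\ m is the one
   subtracted from 1. *)

Lemma binS_ratio (R : numFieldType) (n d : nat) :
  'C(n, d.+1)%:R = 'C(n, d)%:R * (n%:R - d%:R) / d.+1%:R :> R.
Proof.
apply: (canRL (mulfK _)); first by rewrite pnatr_eq0.
case: (leqP d n) => [le_dn | lt_nd].
  by rewrite -natrB // -!natrM mulnC mul_bin_left mulnC.
by rewrite !bin_small ?mul0r // ltnW.
Qed.

(* At j = n the left-hand side divides by 0, hence vanishes. *)
Lemma bin_pred_ratio (R : numFieldType) (n j : nat) :
  'C(n, j.+1)%:R * j.+1%:R / (n%:R - j%:R) = (if (j < n)%N then 'C(n, j) else 0)%:R :> R.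
Proof.
case: ifPn => [lt_jn | ]; last by rewrite -leqNgt => le_nj; rewrite bin_small ?mul0r.
have nz : n%:R - j%:R != 0 :> R by rewrite subr_eq0 eqr_nat neq_ltn lt_jn orbT.
by rewrite binS_ratio divfK ?pnatr_eq0 // mulfK.
Qed.

Lemma Vandermonde_drop_min (m0 r m : nat) :
  (\sum_(j < m) (if j < m0 then 'C(m0, j) * 'C(r, m - j) else 0)
     + 'C(m0, minn m0 m) * 'C(r, m - minn m0 m) = 'C(m0 + r, m))%N.
Proof.
set n := minn m0 m.
have le_nm : (n <= m)%N by rewrite geq_minr.
rewrite -binomial.Vandermonde.
rewrite -(big_mkord xpredT (fun j => 'C(m0, j) * 'C(r, m - j))%N).
rewrite -(big_mkord xpredT (fun j => if j < m0 then 'C(m0, j) * 'C(r, m - j) else 0)%N).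
rewrite (@big_cat_nat _ _ _ n 0 m.+1) ?leqW //= (@big_ltn _ _ _ n m.+1) //.
rewrite [X in (_ + (_ + X))%N]big1_seq ?addn0 /=; last first.
  move=> j /=; rewrite mem_index_iota => /andP[lt_nj le_jm].
  by rewrite bin_small ?mul0n //; move: lt_nj le_jm; rewrite /n; lia.
rewrite addnC [RHS]addnC; congr (_ + _)%N.
rewrite (@big_nat_widen _ _ _ 0 n m) // [RHS]big_mkcond /=.
by apply: eq_big_nat => j lt_jm; rewrite /n; case: ifP; case: ifP => //; lia.
Qed.

Lemma hyper_term_succ (m0 r m j : nat) : (j < m)%N ->
  hyper_pmf m0 r m j.+1 * hyper_g m0 r m j.+1 =
    (if (j < m0)%N then 'C(m0, j) * 'C(r, m - j) else 0)%N%:R / 'C(m0 + r, m)%:R.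
Proof.
move=> lt_jm; rewrite /hyper_pmf /hyper_g.
have [d def_m] : exists d, m = (j.+1 + d)%N by exists (m - j.+1)%N; lia.
have -> : (m - j.+1 = d)%N by lia.
have -> : (m - j = d.+1)%N by lia.
have -> : 1 + m%:R - j.+1%:R = d.+1%:R :> rat by rewrite def_m -addn1 !natrD; ring.
have -> : r%:R + j.+1%:R - m%:R = r%:R - d%:R :> rat by rewrite def_m natrD; ring.
have -> : 1 + m0%:R - j.+1%:R = m0%:R - j%:R :> rat by rewrite -addn1 natrD; ring.
have -> : (if (j < m0)%N then 'C(m0, j) * 'C(r, d.+1) else 0)%N%:R =
    (if (j < m0)%N then 'C(m0, j) else 0)%:R * 'C(r, d.+1)%:R :> rat.
  by case: ifP; rewrite ?natrM ?mul0r.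
by rewrite natrM -bin_pred_ratio (binS_ratio _ r d); ring.
Qed.

Theorem mainTheorem4 (m0 r m : nat) (hm : (m <= m0 + r)%N) :
  hyper_expect m0 r m (hyper_g m0 r m) =
    1 - ('C(m0, minn m0 m) * 'C(r, m - minn m0 m))%:R / ('C(m0 + r, m))%:R
  /\ hyper_expect m0 r m (hyper_g m0 r m) <= 1.
Proof.
have nzB : 'C(m0 + r, m)%:R != 0 :> rat by rewrite pnatr_eq0 -lt0n bin_gt0.
have expectE : hyper_expect m0 r m (hyper_g m0 r m) =
    1 - ('C(m0, minn m0 m) * 'C(r, m - minn m0 m))%:R / ('C(m0 + r, m))%:R.
  rewrite /hyper_expect big_ord_recl {1}/hyper_g /= !mul0r mulr0 add0r.
  under eq_bigr => j _ do rewrite hyper_term_succ //.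
  rewrite -mulr_suml -natr_sum.
  move: nzB; rewrite -(Vandermonde_drop_min m0 r m) natrD => nzB.
  by rewrite -[X in X - _](divff nzB) -mulrBl addrK.
by split=> //; rewrite expectE lerBlDr lerDl divr_ge0.
Qed.
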